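(* For every integer $d\ge 3$, the space $\mathcal P_d$ is path connected.
   Context: A polynomial knot is a map $\phi:\mathbb R\to\mathbb R^3$ with real polynomial components which is a smooth embedding ($\phi$ injective and $\phi'(t)\ne0$ for all $t$). For $d\ge2$, $\mathcal A_d$ is the set of polynomial maps $t\mapsto(f(t),g(t),h(t))$ with $\deg f\le d-2$, $\deg g\le d-1$, $\deg h\le d$, topologized via the bijection $\eta:\mathcal A_d\to\mathbb R^{3d}$ sending $(f,g,h)$ to the vector $(a_0,\dots,a_{d-2},b_0,\dots,b_{d-1},c_0,\dots,c_d)$ of coefficients of $f=\sum a_it^i$, $g=\sum b_it^i$, $h=\sum c_it^i$ (Euclidean topology). The zero polynomial has degree $-\infty$. $\mathcal P_d$ is the subspace of $\mathcal A_d$ consisting of polynomial knots $(f,g,h)$ with $\deg f<\deg g<\deg h\le d$. *)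

From Stdlib Require Import Reals.
Open Scope R_scope.

(* A coefficient sequence; only indices 0..n are meaningful for a
   polynomial of degree <= n. *)
Definition coefs := nat -> R.

(* A point of A_d: coefficient sequences (a, b, c) of (f, g, h), where only
   a_0..a_{d-2}, b_0..b_{d-1}, c_0..c_d are meaningful (the bijection eta). *)
Definition ptA := (coefs * coefs * coefs)%type.

Definition peval (a : coefs) (n : nat) (t : R) : R :=
  sum_f_R0 (fun i => a i * t ^ i) n.

(* Degree of sum_{i=0}^n a_i t^i; None stands for -infinity (zero polynomial). *)
Fixpoint pdeg (a : coefs) (n : nat) : option nat :=
  match n with
  | O => if Req_EM_T (a O) 0 then None else Some O
  | S m => if Req_EM_T (a (S m)) 0 then pdeg a m else Some (S m)
  end.

Definition deg_lt (x y : option nat) : Prop :=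
  match x, y with
  | _, None => False
  | None, Some _ => True
  | Some i, Some j => (i < j)%nat
  end.

Definition deg_le (x : option nat) (d : nat) : Prop :=
  match x with None => True | Some i => (i <= d)%nat end.

Definition fA (d : nat) (p : ptA) : R -> R := let '(a, _, _) := p in peval a (d - 2).
Definition gA (d : nat) (p : ptA) : R -> R := let '(_, b, _) := p in peval b (d - 1).
Definition hA (d : nat) (p : ptA) : R -> R := let '(_, _, c) := p in peval c d.

Definition poly_knot (d : nat) (p : ptA) : Prop :=
  (forall t1 t2, fA d p t1 = fA d p t2 -> gA d p t1 = gA d p t2 ->
                 hA d p t1 = hA d p t2 -> t1 = t2) /\
  (forall t, ~ (derivable_pt_lim (fA d p) t 0 /\
                derivable_pt_lim (gA d p) t 0 /\
                derivable_pt_lim (hA d p) t 0)).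

Definition inPd (d : nat) (p : ptA) : Prop :=
  let '(a, b, c) := p in
  poly_knot d p /\
  deg_lt (pdeg a (d - 2)) (pdeg b (d - 1)) /\
  deg_lt (pdeg b (d - 1)) (pdeg c d) /\
  deg_le (pdeg c d) d.

(* Equality of points of A_d (equality of their images under eta). *)
Definition eqA (d : nat) (p q : ptA) : Prop :=
  let '(a, b, c) := p in let '(a', b', c') := q in
  (forall i, (i <= d - 2)%nat -> a i = a' i) /\
  (forall i, (i <= d - 1)%nat -> b i = b' i) /\
  (forall i, (i <= d)%nat -> c i = c' i).

Definition unit_I (s : R) : Prop := 0 <= s <= 1.

Definition path_in_A (d : nat) (gam : R -> ptA) : Prop :=
  (forall i, (i <= d - 2)%nat -> forall s, unit_I s ->
     continue_in (fun u => fst (fst (gam u)) i) unit_I s) /\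
  (forall i, (i <= d - 1)%nat -> forall s, unit_I s ->
     continue_in (fun u => snd (fst (gam u)) i) unit_I s) /\
  (forall i, (i <= d)%nat -> forall s, unit_I s ->
     continue_in (fun u => snd (gam u) i) unit_I s).

Definition Pd_path_connected (d : nat) : Prop :=
  forall p q, inPd d p -> inPd d q ->
  exists gam : R -> ptA,
    path_in_A d gam /\ eqA d (gam 0) p /\ eqA d (gam 1) q /\
    (forall s, unit_I s -> inPd d (gam s)).

(* Every knot of P_d is joined to the standard knot (0, t, t^2).  Translating f and g and
   shearing h by g or f (which preserves knots and degrees) achieves f(0) = 0, g(0) <> 0 and
   h'(0) <> 0, using phi'(0) <> 0.  The rescaled knots
   t |-> (f(s t), g(s t), (h(s t) - h(0)) / s + h(0)), s in (0, 1], are images of phi under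
   an affine map and a reparametrisation, and as s -> 0 they tend to the line
   (0, g(0), h(0) + h'(0) t), which is still in P_d.  Adding u h'(0) t^3 to h keeps h' nowhere
   zero, so meanwhile g can be moved to t (this is where d >= 3 is needed); once g = t, h can
   be moved linearly to t^2.  All paths are affine in each coefficient. *)

From Stdlib Require Import Reals Lra Lia.
Open Scope R_scope.

Lemma sum_f_R0_single (f : nat -> R) k n : (k <= n)%nat ->
  (forall i, i <> k -> f i = 0) -> sum_f_R0 f n = f k.
Proof.
  intros Hkn Hf. induction n as [|n IH]; simpl.
  - now replace k with 0%nat by lia.
  - destruct (Nat.eq_dec k (S n)) as [->|Hk].
    + rewrite sum_eq_R0 by (intros i Hi; apply Hf; lia). ring.
    + rewrite IH, (Hf (S n)) by lia. ring.
Qed.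

Definition pder (a : coefs) (n : nat) (t : R) : R :=
  sum_f_R0 (fun i => INR i * a i * t ^ pred i) n.

Lemma peval_derivable a n t : derivable_pt_lim (peval a n) t (pder a n t).
Proof.
  induction n as [|n IH].
  - unfold pder; simpl. change (peval a 0) with (fct_cte (a 0%nat * 1)).
    replace (0 * a 0%nat * 1) with 0 by ring. apply derivable_pt_lim_const.
  - change (peval a (S n)) with (peval a n + mult_real_fct (a (S n)) (fun y => y ^ S n))%F.
    change (pder a (S n) t) with (pder a n t + INR (S n) * a (S n) * t ^ pred (S n)).
    replace (INR (S n) * a (S n) * t ^ pred (S n))
      with (a (S n) * (INR (S n) * t ^ pred (S n))) by ring.
    apply derivable_pt_lim_plus; [exact IH|].
    apply derivable_pt_lim_scal, derivable_pt_lim_pow.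
Qed.

Lemma pder_at0 a n : (1 <= n)%nat -> pder a n 0 = a 1%nat.
Proof.
  intros Hn. unfold pder. rewrite (sum_f_R0_single _ 1); [simpl; ring|exact Hn|].
  intros [|[|i]] Hi; simpl; [ring|lia|ring].
Qed.

Definition czero : coefs := fun _ => 0.
Definition cadd (a b : coefs) : coefs := fun i => a i + b i.
Definition cscal (x : R) (a : coefs) : coefs := fun i => x * a i.
Definition cmono (k : nat) : coefs := fun i => if Nat.eqb i k then 1 else 0.
Definition ctrunc (a : coefs) (m : nat) : coefs := fun i => if Nat.leb i m then a i else 0.
Definition cdilate (s : R) (a : coefs) : coefs := fun i => a i * s ^ i.

Lemma peval_ext a b n t : (forall i, (i <= n)%nat -> a i = b i) -> peval a n t = peval b n t.
Proof. intros H; apply sum_eq; intros i Hi; now rewrite H. Qed.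
Lemma pder_ext a b n t : (forall i, (i <= n)%nat -> a i = b i) -> pder a n t = pder b n t.
Proof. intros H; apply sum_eq; intros i Hi; now rewrite H. Qed.

Lemma peval_zero n t : peval czero n t = 0.
Proof. apply sum_eq_R0; intros; unfold czero; ring. Qed.
Lemma pder_zero n t : pder czero n t = 0.
Proof. apply sum_eq_R0; intros; unfold czero; ring. Qed.
Lemma peval_add a b n t : peval (cadd a b) n t = peval a n t + peval b n t.
Proof. unfold peval, cadd. rewrite <- sum_plus. apply sum_eq; intros; ring. Qed.
Lemma pder_add a b n t : pder (cadd a b) n t = pder a n t + pder b n t.
Proof. unfold pder, cadd. rewrite <- sum_plus. apply sum_eq; intros; ring. Qed.
Lemma peval_scal x a n t : peval (cscal x a) n t = x * peval a n t.
Proof. unfold peval, cscal. rewrite scal_sum. apply sum_eq; intros; ring. Qed.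
Lemma pder_scal x a n t : pder (cscal x a) n t = x * pder a n t.
Proof. unfold pder, cscal. rewrite scal_sum. apply sum_eq; intros; ring. Qed.

Lemma peval_mono k n t : (k <= n)%nat -> peval (cmono k) n t = t ^ k.
Proof.
  intros Hk. unfold peval. rewrite (sum_f_R0_single _ k n Hk).
  - unfold cmono; rewrite Nat.eqb_refl; ring.
  - intros i Hi; unfold cmono; destruct (Nat.eqb_spec i k); [lia|ring].
Qed.
Lemma pder_mono k n t : (k <= n)%nat -> pder (cmono k) n t = INR k * t ^ pred k.
Proof.
  intros Hk. unfold pder. rewrite (sum_f_R0_single _ k n Hk).
  - unfold cmono; rewrite Nat.eqb_refl; ring.
  - intros i Hi; unfold cmono; destruct (Nat.eqb_spec i k); [lia|ring].
Qed.

Lemma peval_trunc a m n t : (m <= n)%nat -> peval (ctrunc a m) n t = peval a m t.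
Proof.
  induction 1 as [|n Hmn IH].
  - apply peval_ext; intros i Hi; unfold ctrunc. destruct (Nat.leb_spec i m); [easy|lia].
  - unfold peval in *; simpl. rewrite IH; unfold ctrunc.
    destruct (Nat.leb_spec (S n) m); [lia|ring].
Qed.
Lemma pder_trunc a m n t : (m <= n)%nat -> pder (ctrunc a m) n t = pder a m t.
Proof.
  induction 1 as [|n Hmn IH].
  - apply pder_ext; intros i Hi; unfold ctrunc. destruct (Nat.leb_spec i m); [easy|lia].
  - unfold pder in *; rewrite tech5, IH; unfold ctrunc.
    destruct (Nat.leb_spec (S n) m); [lia|ring].
Qed.

Lemma peval_dilate s a n t : peval (cdilate s a) n t = peval a n (s * t).
Proof. apply sum_eq; intros; unfold cdilate; rewrite Rpow_mult_distr; ring. Qed.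
Lemma pder_dilate s a n t : pder (cdilate s a) n t = s * pder a n (s * t).
Proof.
  unfold pder, cdilate. rewrite scal_sum. apply sum_eq; intros [|i] _; simpl; [ring|].
  rewrite Rpow_mult_distr; ring.
Qed.

Definition knot_fun (f g h f' g' h' : R -> R) : Prop :=
  (forall t1 t2, f t1 = f t2 -> g t1 = g t2 -> h t1 = h t2 -> t1 = t2) /\
  (forall t, ~ (f' t = 0 /\ g' t = 0 /\ h' t = 0)).

Definition coef_knot (d : nat) (p : ptA) : Prop :=
  let '(a, b, c) := p in
  knot_fun (peval a (d - 2)) (peval b (d - 1)) (peval c d)
           (pder a (d - 2)) (pder b (d - 1)) (pder c d).

Lemma poly_knot_iff d p : poly_knot d p <-> coef_knot d p.
Proof.
  destruct p as [[a b] c]. unfold poly_knot, coef_knot, knot_fun, fA, gA, hA.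
  split; intros [Hinj Hreg]; split; auto; intros t [Ha [Hb Hc]]; apply (Hreg t).
  - split; [|split]; [rewrite <- Ha|rewrite <- Hb|rewrite <- Hc]; apply peval_derivable.
  - repeat split; eapply uniqueness_limite; eauto using peval_derivable.
Qed.

Lemma knot_fun_ext f g h f' g' h' F G H F' G' H' :
  (forall t, F t = f t) -> (forall t, G t = g t) -> (forall t, H t = h t) ->
  (forall t, F' t = f' t) -> (forall t, G' t = g' t) -> (forall t, H' t = h' t) ->
  knot_fun f g h f' g' h' -> knot_fun F G H F' G' H'.
Proof.
  intros EF EG EH EF' EG' EH' [Hinj Hreg]. split.
  - intros t1 t2. rewrite !EF, !EG, !EH. apply Hinj.
  - intros t. rewrite EF', EG', EH'. apply Hreg.
Qed.

Lemma Rmult_eq0_r x y : x <> 0 -> x * y = 0 -> y = 0.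
Proof. intros Hx H; destruct (Rmult_integral _ _ H); [contradiction|assumption]. Qed.

Lemma knot_fun_affine f g h f' g' h' F G H F' G' H' s al be de ga ep ze k1 k2 k3 :
  knot_fun f g h f' g' h' -> s <> 0 -> al <> 0 -> be <> 0 -> de <> 0 ->
  (forall t, F t = al * f (s * t) + k1) ->
  (forall t, G t = be * g (s * t) + ga * f (s * t) + k2) ->
  (forall t, H t = de * h (s * t) + ep * g (s * t) + ze * f (s * t) + k3) ->
  (forall t, F' t = s * (al * f' (s * t))) ->
  (forall t, G' t = s * (be * g' (s * t) + ga * f' (s * t))) ->
  (forall t, H' t = s * (de * h' (s * t) + ep * g' (s * t) + ze * f' (s * t))) ->
  knot_fun F G H F' G' H'.
Proof.
  intros [Hinj Hreg] Hs Hal Hbe Hde EF EG EH EF' EG' EH'. split.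
  - intros t1 t2. rewrite !EF, !EG, !EH. intros E1 E2 E3.
    assert (Ef : f (s * t1) = f (s * t2)) by (apply (Rmult_eq_reg_l al); lra).
    assert (Eg : g (s * t1) = g (s * t2)).
    { apply (Rmult_eq_reg_l be); auto. rewrite Ef in E2. lra. }
    assert (Eh : h (s * t1) = h (s * t2)).
    { apply (Rmult_eq_reg_l de); auto. rewrite Ef, Eg in E3. lra. }
    apply (Rmult_eq_reg_l s); auto.
  - intros t [D1 [D2 D3]]. rewrite EF' in D1; rewrite EG' in D2; rewrite EH' in D3.
    assert (Df : f' (s * t) = 0) by (apply (Rmult_eq0_r al), (Rmult_eq0_r s); auto).
    rewrite Df in D2, D3.
    assert (Dg : g' (s * t) = 0).
    { apply (Rmult_eq0_r be), (Rmult_eq0_r s); auto. rewrite <- D2; ring. }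
    rewrite Dg in D3.
    assert (Dh : h' (s * t) = 0).
    { apply (Rmult_eq0_r de), (Rmult_eq0_r s); auto. rewrite <- D3; ring. }
    exact (Hreg (s * t) (conj Df (conj Dg Dh))).
Qed.

Lemma knot_fun_of_g f g h f' g' h' :
  (forall t1 t2, g t1 = g t2 -> t1 = t2) -> (forall t, g' t <> 0) -> knot_fun f g h f' g' h'.
Proof. intros Hinj Hreg; split; [auto|intros t [_ [Dg _]]; exact (Hreg t Dg)]. Qed.

Lemma knot_fun_of_h f g h f' g' h' :
  (forall t1 t2, h t1 = h t2 -> t1 = t2) -> (forall t, h' t <> 0) -> knot_fun f g h f' g' h'.
Proof. intros Hinj Hreg; split; [auto|intros t [_ [_ Dh]]; exact (Hreg t Dh)]. Qed.

Definition has_deg (a : coefs) (n k : nat) : Prop :=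
  (k <= n)%nat /\ a k <> 0 /\ forall j, (k < j <= n)%nat -> a j = 0.

Lemma pdeg_Some a n k : pdeg a n = Some k <-> has_deg a n k.
Proof.
  unfold has_deg. induction n as [|n IH]; simpl.
  - destruct (Req_EM_T (a 0%nat) 0) as [E|E]; split.
    + discriminate.
    + intros [Hk [Ha _]]. replace k with 0%nat in Ha by lia. contradiction.
    + intros H; injection H as <-. repeat split; auto; lia.
    + intros [Hk _]. f_equal; lia.
  - destruct (Req_EM_T (a (S n)) 0) as [E|E].
    + rewrite IH. split; intros [Hk [Ha Hj]]; repeat split; auto.
      * intros j ?. destruct (Nat.eq_dec j (S n)) as [->|]; [exact E|apply Hj; lia].
      * destruct (Nat.eq_dec k (S n)) as [->|]; [contradiction|lia].
      * intros j ?; apply Hj; lia.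
    + split.
      * intros H; injection H as <-. repeat split; auto; lia.
      * intros [Hk [Ha Hj]]. destruct (Nat.eq_dec k (S n)) as [->|]; [reflexivity|].
        exfalso; apply E, Hj; lia.
Qed.

Lemma pdeg_None a n : pdeg a n = None <-> forall j, (j <= n)%nat -> a j = 0.
Proof.
  induction n as [|n IH]; simpl.
  - destruct (Req_EM_T (a 0%nat) 0) as [E|E]; split; intros H.
    + intros j Hj; now replace j with 0%nat by lia.
    + reflexivity.
    + discriminate.
    + exfalso; apply E, H; lia.
  - destruct (Req_EM_T (a (S n)) 0) as [E|E].
    + rewrite IH. split; intros H j Hj; [|apply H; lia].
      destruct (Nat.eq_dec j (S n)) as [->|]; [exact E|apply H; lia].
    + split; intros H; [discriminate|exfalso; apply E, H; lia].
Qed.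

Lemma pdeg_ext a b n : (forall i, (i <= n)%nat -> a i = b i) -> pdeg a n = pdeg b n.
Proof.
  induction n as [|n IH]; intros E; simpl; rewrite E by lia; [reflexivity|].
  now rewrite IH by (intros; apply E; lia).
Qed.

Lemma has_deg_add_low a e n k : has_deg a n k ->
  (forall j, (k <= j <= n)%nat -> e j = 0) -> has_deg (cadd a e) n k.
Proof.
  intros [Hk [Ha Hj]] He. unfold cadd. repeat split; auto.
  - rewrite He by lia. now rewrite Rplus_0_r.
  - intros j ?. rewrite Hj, He by lia. ring.
Qed.

Lemma has_deg_zero_pattern a a' n k : (forall i, a' i = 0 <-> a i = 0) ->
  has_deg a n k -> has_deg a' n k.
Proof.
  intros E [Hk [Ha Hj]]. repeat split; auto.
  - now rewrite E.
  - intros j ?; apply E, Hj; lia.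
Qed.

(* [deg f < deg g = kg] is encoded as the vanishing of the coefficients of f from [kg] on. *)
Definition degs_ok (d : nat) (p : ptA) : Prop :=
  let '(a, b, c) := p in
  exists kg kh, (kg < kh)%nat /\ has_deg b (d - 1) kg /\ has_deg c d kh /\
    forall j, (kg <= j <= d - 2)%nat -> a j = 0.

Lemma inPd_iff d p : inPd d p <-> coef_knot d p /\ degs_ok d p.
Proof.
  destruct p as [[a b] c]. unfold inPd, degs_ok. rewrite poly_knot_iff. split.
  - intros [HK [Hab [Hbc _]]]. split; [exact HK|].
    destruct (pdeg c d) as [kh|] eqn:Ec; [|now destruct (pdeg b (d - 1))].
    destruct (pdeg b (d - 1)) as [kg|] eqn:Eb; [|now destruct (pdeg a (d - 2))].
    apply pdeg_Some in Eb, Ec. exists kg, kh. split; [exact Hbc|split; [exact Eb|split; [exact Ec|]]].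
    destruct (pdeg a (d - 2)) as [ka|] eqn:Ea.
    + apply pdeg_Some in Ea as [_ [_ Hz]]. simpl in Hab. intros j ?. apply Hz; lia.
    + intros j ?. apply pdeg_None with (n := (d - 2)%nat); auto; lia.
  - intros [HK [kg [kh [Hlt [Hb [Hc Ha]]]]]]. split; [exact HK|].
    rewrite (proj2 (pdeg_Some _ _ _) Hb), (proj2 (pdeg_Some _ _ _) Hc). simpl.
    repeat split; [|exact Hlt|apply Hc].
    destruct (pdeg a (d - 2)) as [ka|] eqn:Ea; simpl; auto.
    apply pdeg_Some in Ea as [? [Hka _]]. destruct (Nat.lt_ge_cases ka kg); auto.
    exfalso; apply Hka, Ha; lia.
Qed.

Lemma inPd_eqA d p q : eqA d p q -> inPd d p -> inPd d q.
Proof.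
  destruct p as [[a b] c], q as [[a' b'] c']. intros [Ea [Eb Ec]]. unfold inPd.
  rewrite (pdeg_ext a' a), (pdeg_ext b' b), (pdeg_ext c' c) by (intros; symmetry; auto).
  rewrite !poly_knot_iff. intros [HK HD]. split; [|exact HD].
  revert HK; apply knot_fun_ext; intros t;
    (apply peval_ext || apply pder_ext); intros; symmetry; auto.
Qed.

Lemma eqA_refl d p : eqA d p p.
Proof. destruct p as [[a b] c]; simpl; auto. Qed.

Lemma eqA_sym d p q : eqA d p q -> eqA d q p.
Proof.
  destruct p as [[a b] c], q as [[a' b'] c']; simpl.
  intros [Ea [Eb Ec]]; repeat split; intros; symmetry; auto.
Qed.

Lemma eqA_trans d p q r : eqA d p q -> eqA d q r -> eqA d p r.
Proof.
  destruct p as [[a b] c], q as [[a' b'] c'], r as [[a'' b''] c'']; simpl.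
  intros [Ea [Eb Ec]] [Ea' [Eb' Ec']]; repeat split; intros;
    [rewrite Ea|rewrite Eb|rewrite Ec]; auto.
Qed.

Definition coef_continuous (d : nat) (gam : R -> ptA) : Prop :=
  (forall i, (i <= d - 2)%nat -> continuity (fun u => fst (fst (gam u)) i)) /\
  (forall i, (i <= d - 1)%nat -> continuity (fun u => snd (fst (gam u)) i)) /\
  (forall i, (i <= d)%nat -> continuity (fun u => snd (gam u) i)).

Definition joinable (d : nat) (p q : ptA) : Prop :=
  exists gam, coef_continuous d gam /\ eqA d (gam 0) p /\ eqA d (gam 1) q /\
    forall s, unit_I s -> inPd d (gam s).

Lemma joinable_path d (gam : R -> ptA) : coef_continuous d gam ->
  (forall s, unit_I s -> inPd d (gam s)) -> joinable d (gam 0) (gam 1).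
Proof. intros Hc Hin. exists gam; auto using eqA_refl. Qed.

Lemma joinable_eqA d p p' q q' : eqA d p' p -> eqA d q q' -> joinable d p q -> joinable d p' q'.
Proof.
  intros Ep Eq [gam [Hc [E0 [E1 Hin]]]].
  exists gam. split; [exact Hc|split; [|split; [|exact Hin]]].
  - exact (eqA_trans _ _ _ _ E0 (eqA_sym _ _ _ Ep)).
  - exact (eqA_trans _ _ _ _ E1 Eq).
Qed.

Lemma joinable_sym d p q : joinable d p q -> joinable d q p.
Proof.
  intros [gam [[Ca [Cb Cc]] [E0 [E1 Hin]]]]. exists (fun s => gam (1 - s)).
  assert (Hrev : forall f : R -> R, continuity f -> continuity (fun s => f (1 - s))).
  { intros f Hf. apply (continuity_comp (fun s => 1 - s) f); [reg|exact Hf]. }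
  split; [split; [|split]|split; [|split]].
  - intros i Hi; exact (Hrev _ (Ca i Hi)).
  - intros i Hi; exact (Hrev _ (Cb i Hi)).
  - intros i Hi; exact (Hrev _ (Cc i Hi)).
  - replace (1 - 0) with 1 by ring; exact E1.
  - replace (1 - 1) with 0 by ring; exact E0.
  - intros s Hs; apply Hin; unfold unit_I in *; lra.
Qed.

(* On [0,1], [lo s] and [hi s] are [2s] and [2s-1] clamped to [0,1]; gluing paths by
   [g1 (lo s) + g2 (hi s) - g1 1] avoids any case split in the continuity proof. *)
Definition lo (s : R) : R := (2 * s + 1 - Rabs (2 * s - 1)) / 2.
Definition hi (s : R) : R := (2 * s - 1 + Rabs (2 * s - 1)) / 2.

Lemma lo_hi_left s : s <= /2 -> lo s = 2 * s /\ hi s = 0.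
Proof. intros; unfold lo, hi. rewrite Rabs_left1 by lra. split; field. Qed.

Lemma lo_hi_right s : /2 <= s -> lo s = 1 /\ hi s = 2 * s - 1.
Proof. intros; unfold lo, hi. rewrite Rabs_right by lra. split; field. Qed.

Definition glue (g1 g2 : R -> ptA) (s : R) : ptA :=
  (fun i => fst (fst (g1 (lo s))) i + fst (fst (g2 (hi s))) i - fst (fst (g1 1)) i,
   fun i => snd (fst (g1 (lo s))) i + snd (fst (g2 (hi s))) i - snd (fst (g1 1)) i,
   fun i => snd (g1 (lo s)) i + snd (g2 (hi s)) i - snd (g1 1) i).

Lemma continuity_glue (x1 x2 : R -> R) k : continuity x1 -> continuity x2 ->
  continuity (fun s => x1 (lo s) + x2 (hi s) - k).
Proof.
  intros H1 H2.
  assert (continuity lo) by (unfold lo; reg).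
  assert (continuity hi) by (unfold hi; reg).
  apply (continuity_minus (fun s => x1 (lo s) + x2 (hi s)) (fun _ => k)).
  - apply (continuity_plus (fun s => x1 (lo s)) (fun s => x2 (hi s)));
      [apply (continuity_comp lo x1)|apply (continuity_comp hi x2)]; auto.
  - apply continuity_const; intros ? ?; reflexivity.
Qed.

Lemma glue_left d g1 g2 s : eqA d (g2 0) (g1 1) -> s <= /2 ->
  eqA d (glue g1 g2 s) (g1 (2 * s)).
Proof.
  intros E Hs. unfold glue. destruct (lo_hi_left s Hs) as [-> ->]. revert E.
  destruct (g1 1) as [[a b] c], (g2 0) as [[a' b'] c'], (g1 (2 * s)) as [[x y] z]; simpl.
  intros [Ea [Eb Ec]]; repeat split; intros; [rewrite Ea|rewrite Eb|rewrite Ec]; auto; ring.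
Qed.

Lemma glue_right d g1 g2 s : /2 <= s -> eqA d (glue g1 g2 s) (g2 (2 * s - 1)).
Proof.
  intros Hs. unfold glue. destruct (lo_hi_right s Hs) as [-> ->].
  destruct (g1 1) as [[a b] c], (g2 (2 * s - 1)) as [[x y] z]; simpl.
  repeat split; intros; ring.
Qed.

Lemma joinable_trans d p q r : joinable d p q -> joinable d q r -> joinable d p r.
Proof.
  intros [g1 [[Ca [Cb Cc]] [E0 [E1 Hin1]]]] [g2 [[Da [Db Dc]] [F0 [F1 Hin2]]]].
  assert (E : eqA d (g2 0) (g1 1)) by eauto using eqA_trans, eqA_sym.
  exists (glue g1 g2). split; [split; [|split]|split; [|split]].
  - intros i Hi; unfold glue; simpl; apply (continuity_glue (fun u => fst (fst (g1 u)) i) (fun u => fst (fst (g2 u)) i)); auto.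
  - intros i Hi; unfold glue; simpl; apply (continuity_glue (fun u => snd (fst (g1 u)) i) (fun u => snd (fst (g2 u)) i)); auto.
  - intros i Hi; unfold glue; simpl; apply (continuity_glue (fun u => snd (g1 u) i) (fun u => snd (g2 u) i)); auto.
  - eapply eqA_trans; [apply glue_left; auto; lra|]. now replace (2 * 0) with 0 by ring.
  - eapply eqA_trans; [apply glue_right; lra|]. now replace (2 * 1 - 1) with 1 by ring.
  - intros s [Hs0 Hs1]. destruct (Rle_dec s (/2)).
    + apply (inPd_eqA d (g1 (2 * s))); [apply eqA_sym, glue_left; auto|apply Hin1; split; lra].
    + apply (inPd_eqA d (g2 (2 * s - 1))); [apply eqA_sym, glue_right; lra|apply Hin2; split; lra].
Qed.

Lemma continue_in_of_continuity (f : R -> R) s : continuity f -> continue_in f unit_I s.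
Proof.
  intros Hf eps Heps. destruct (Hf s eps Heps) as [alp [Halp Hx]].
  exists alp; split; [exact Halp|]. intros y [[_ Hne] Hd]. apply Hx. repeat split; auto.
Qed.

Lemma path_of_joinable d p q : joinable d p q -> exists gam : R -> ptA,
  path_in_A d gam /\ eqA d (gam 0) p /\ eqA d (gam 1) q /\ (forall s, unit_I s -> inPd d (gam s)).
Proof.
  intros [gam [[Ca [Cb Cc]] H]]. exists gam. split; [|exact H].
  repeat split; intros; apply continue_in_of_continuity; auto.
Qed.

Ltac poly_simpl :=
  rewrite ?peval_add, ?pder_add, ?peval_scal, ?pder_scal, ?peval_zero, ?pder_zero;
  rewrite ?peval_mono, ?pder_mono by lia; simpl.

Ltac coef_simpl :=
  unfold cadd, cscal, cmono, czero, ctrunc;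
  repeat match goal with
         | |- context [Nat.eqb ?x ?y] => destruct (Nat.eqb_spec x y)
         | |- context [Nat.leb ?x ?y] => destruct (Nat.leb_spec x y)
         end;
  try (exfalso; lia).

Ltac coef_continuity :=
  split; [|split]; intros i Hi; simpl; unfold cadd, cscal, cmono, czero, ctrunc;
  repeat match goal with
         | |- context [Nat.eqb ?x ?y] => destruct (Nat.eqb x y)
         | |- context [Nat.leb ?x ?y] => destruct (Nat.leb x y)
         end; reg.

Lemma joinable_inPd_r d p q : joinable d p q -> inPd d q.
Proof.
  intros [gam [_ [_ [E1 Hin]]]]. apply (inPd_eqA d (gam 1) q E1), Hin. split; lra.
Qed.

Lemma degs_ok_zero_pattern d a b c a' b' c' :
  (forall i, a' i = 0 <-> a i = 0) -> (forall i, b' i = 0 <-> b i = 0) ->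
  (forall i, c' i = 0 <-> c i = 0) -> degs_ok d (a, b, c) -> degs_ok d (a', b', c').
Proof.
  intros Ea Eb Ec [kg [kh [Hlt [Hb [Hc Ha]]]]]. exists kg, kh.
  split; [exact Hlt|split; [|split]]; try (eapply has_deg_zero_pattern; eassumption).
  intros j Hj; apply Ea, Ha, Hj.
Qed.

(** * Moving a knot to a normal form near [t = 0] *)

(* [ctrunc] discards the coefficients of f and g beyond their degree bounds, which carry no
   meaning. *)
Definition shift_shear (d : nat) (a b c : coefs) (k1 k2 e w : R) : ptA :=
  (cadd a (cscal k1 (cmono 0)), cadd b (cscal k2 (cmono 0)),
   cadd c (cadd (cscal e (ctrunc b (d - 1))) (cscal w (ctrunc a (d - 2))))).

(* Translating f is harmless unless f is the zero polynomial, translating g unless g is a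
   nonzero constant. *)
Lemma inPd_shift_shear d a b c k1 k2 e w : (2 <= d)%nat -> inPd d (a, b, c) ->
  (a 0%nat = 0 -> k1 = 0) -> (b 0%nat <> 0 -> k2 = 0) -> inPd d (shift_shear d a b c k1 k2 e w).
Proof.
  intros Hd Hin Hk1 Hk2. apply inPd_iff in Hin as [HK [kg [kh [Hlt [Hb [Hc Ha]]]]]].
  apply inPd_iff. split.
  - unfold shift_shear, coef_knot in *.
    apply (knot_fun_affine _ _ _ _ _ _ _ _ _ _ _ _ 1 1 1 1 0 e w k1 k2 0 HK);
      try apply R1_neq_R0; intros t; poly_simpl; rewrite ?peval_trunc, ?pder_trunc by lia;
      rewrite ?Rmult_1_l; ring.
  - exists kg, kh. split; [exact Hlt|split; [|split]].
    + apply has_deg_add_low; [exact Hb|]. intros j Hj. coef_simpl; [|ring].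
      subst j. rewrite Hk2; [ring|]. replace 0%nat with kg by lia. apply Hb.
    + apply has_deg_add_low; [exact Hc|]. intros j Hj. destruct Hb as [_ [_ Hb]].
      coef_simpl; rewrite ?Hb, ?Ha by lia; ring.
    + intros j Hj. coef_simpl; rewrite Ha by lia; [|ring].
      subst j. rewrite Hk1; [ring|apply Ha; lia].
Qed.

Lemma shear_exists x y z : ~ (x = 0 /\ y = 0 /\ z = 0) -> exists e w, z + e * y + w * x <> 0.
Proof.
  intros H. destruct (Req_EM_T z 0) as [Hz|Hz]; [destruct (Req_EM_T y 0) as [Hy|Hy]|].
  - exists 0, 1. intros E; apply H; repeat split; lra.
  - exists 1, 0. lra.
  - exists 0, 0. lra.
Qed.

Lemma joinable_normalize d a b c : (3 <= d)%nat -> inPd d (a, b, c) ->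
  exists a1 b1 c1, joinable d (a, b, c) (a1, b1, c1) /\
    a1 0%nat = 0 /\ b1 0%nat <> 0 /\ c1 1%nat <> 0.
Proof.
  intros Hd Hin.
  assert (Hreg0 : ~ (a 1%nat = 0 /\ b 1%nat = 0 /\ c 1%nat = 0)).
  { apply inPd_iff in Hin as [[_ Hreg] _]. rewrite <- (pder_at0 a (d - 2)) by lia.
    rewrite <- (pder_at0 b (d - 1)), <- (pder_at0 c d) by lia. apply Hreg. }
  destruct (shear_exists _ _ _ Hreg0) as [e [w Hc1]].
  assert (HB : exists B, B <> 0 /\ (b 0%nat <> 0 -> B = b 0%nat)).
  { destruct (Req_EM_T (b 0%nat) 0); [exists 1|exists (b 0%nat)]; split; auto; lra. }
  destruct HB as [B [HB HBb]].
  set (P u := shift_shear d a b c (- (u * a 0%nat)) (u * (B - b 0%nat)) (u * e) (u * w)).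
  exists (cadd a (cscal (- a 0%nat) (cmono 0))), (cadd b (cscal (B - b 0%nat) (cmono 0))),
    (cadd c (cadd (cscal e (ctrunc b (d - 1))) (cscal w (ctrunc a (d - 2))))).
  split; [|split; [|split]]; [|coef_simpl..]; [|ring|intros E; apply HB; lra|intros E; apply Hc1; lra].
  apply (joinable_eqA d (P 0) _ (P 1)).
  - unfold P; simpl; repeat split; intros; coef_simpl; ring.
  - unfold P; simpl; repeat split; intros; coef_simpl; ring.
  - apply joinable_path; [unfold P; coef_continuity|].
    intros u Hu. apply inPd_shift_shear; [lia|exact Hin| |].
    + intros ->; ring.
    + intros Hb0; rewrite HBb by exact Hb0; ring.
Qed.

(** * Blowing up a normalised knot at [t = 0] *)

(* For [s <> 0] this is [(c(s t) - c(0)) / s + c(0)]; at [s = 0] it is the tangent line. *)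
Definition cblowup (s : R) (c : coefs) : coefs :=
  fun i => match i with O => c O | S k => c (S k) * s ^ k end.

Lemma cblowup_eq s c i : s <> 0 ->
  cblowup s c i = cadd (cscal (/ s) (cdilate s c)) (cscal ((s - 1) / s * c 0%nat) (cmono 0)) i.
Proof. intros Hs. unfold cblowup, cadd, cscal, cdilate, cmono. destruct i; simpl; field; auto. Qed.

Lemma cdilate_zero_pattern s a i : s <> 0 -> (cdilate s a i = 0 <-> a i = 0).
Proof.
  intros Hs. unfold cdilate. split; intros E; [|rewrite E; ring].
  destruct (Rmult_integral _ _ E) as [|Hp]; [assumption|exfalso; exact (pow_nonzero s i Hs Hp)].
Qed.

Lemma cblowup_zero_pattern s c i : s <> 0 -> (cblowup s c i = 0 <-> c i = 0).
Proof.
  intros Hs. destruct i as [|i]; [reflexivity|]. unfold cblowup. split; intros E; [|rewrite E; ring].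
  destruct (Rmult_integral _ _ E) as [|Hp]; [assumption|exfalso; exact (pow_nonzero s i Hs Hp)].
Qed.

Definition line_knot (B C0 C1 : R) : ptA :=
  (czero, cscal B (cmono 0), cadd (cscal C0 (cmono 0)) (cscal C1 (cmono 1))).

Lemma inPd_line d B C0 C1 : (1 <= d)%nat -> B <> 0 -> C1 <> 0 -> inPd d (line_knot B C0 C1).
Proof.
  intros Hd HB HC. apply inPd_iff. split.
  - apply knot_fun_of_h; [intros t1 t2|intros t]; poly_simpl.
    + intros E. apply (Rmult_eq_reg_l C1); [lra|exact HC].
    + intros E; apply HC; lra.
  - exists 0%nat, 1%nat. repeat split; try lia; intros; coef_simpl; lra.
Qed.

Lemma joinable_blowup d a b c : (1 <= d)%nat -> inPd d (a, b, c) ->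
  a 0%nat = 0 -> b 0%nat <> 0 -> c 1%nat <> 0 ->
  joinable d (line_knot (b 0%nat) (c 0%nat) (c 1%nat)) (a, b, c).
Proof.
  intros Hd Hin Ha0 Hb0 Hc1.
  set (P s := (cdilate s a, cdilate s b, cblowup s c)).
  apply (joinable_eqA d (P 0) _ (P 1)).
  - unfold P, line_knot; simpl. repeat split; intros [|[|i]] _; coef_simpl; unfold cdilate;
      simpl; rewrite ?Ha0; ring.
  - unfold P; simpl. repeat split; intros [|i] _; unfold cdilate; simpl; rewrite ?pow1; ring.
  - apply joinable_path.
    + unfold P, cdilate, cblowup. split; [|split]; intros [|i] _; simpl; reg.
    + intros s _. destruct (Req_EM_T s 0) as [->|Hs].
      * apply (inPd_eqA d (line_knot (b 0%nat) (c 0%nat) (c 1%nat))); [|apply inPd_line; auto].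
        unfold P, line_knot; simpl. repeat split; intros [|[|i]] _; coef_simpl; unfold cdilate;
          simpl; rewrite ?Ha0; ring.
      * apply inPd_iff in Hin as [HK HD]. apply inPd_iff. split.
        -- unfold P, coef_knot in *.
           apply (knot_fun_affine _ _ _ _ _ _ _ _ _ _ _ _ s 1 1 (/ s) 0 0 0 0 0
                    ((s - 1) / s * c 0%nat) HK Hs R1_neq_R0 R1_neq_R0 (Rinv_neq_0_compat s Hs));
             intros t; rewrite ?(peval_ext (cblowup s c) _ d t (fun i _ => cblowup_eq s c i Hs)),
               ?(pder_ext (cblowup s c) _ d t (fun i _ => cblowup_eq s c i Hs));
             poly_simpl; rewrite ?peval_dilate, ?pder_dilate; field; exact Hs.
        -- apply (degs_ok_zero_pattern d a b c); auto using cdilate_zero_pattern, cblowup_zero_pattern.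
Qed.

(** * From the tangent line to the standard knot [(0, t, t^2)] *)

Definition hcubic (u C0 C1 : R) : coefs :=
  cadd (cadd (cscal C0 (cmono 0)) (cscal C1 (cmono 1))) (cscal (u * C1) (cmono 3)).

Lemma hcubic_injective d u C0 C1 : (3 <= d)%nat -> C1 <> 0 -> 0 <= u ->
  (forall t1 t2, peval (hcubic u C0 C1) d t1 = peval (hcubic u C0 C1) d t2 -> t1 = t2) /\
  (forall t, pder (hcubic u C0 C1) d t <> 0).
Proof.
  intros Hd HC Hu. unfold hcubic. split.
  - intros t1 t2. poly_simpl. intros E.
    assert (E' : C1 * ((t1 - t2) * (1 + u * (t1 * t1 + t1 * t2 + t2 * t2))) = 0)
      by (rewrite <- (Rminus_diag_eq _ _ E); ring).
    apply Rmult_eq0_r in E'; [|exact HC].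
    destruct (Rmult_integral _ _ E') as [|E'']; [lra|].
    assert (0 <= t1 * t1 + t1 * t2 + t2 * t2) by nra. nra.
  - intros t. poly_simpl. intros E.
    assert (E' : C1 * (1 + 3 * u * (t * t)) = 0) by (rewrite <- E; ring).
    apply Rmult_eq0_r in E'; [nra|exact HC].
Qed.

Definition std_knot : ptA := (czero, cmono 1, cmono 2).

Lemma joinable_line_cubic d B C0 C1 : (3 <= d)%nat -> B <> 0 -> C1 <> 0 ->
  joinable d (line_knot B C0 C1) (czero, cmono 1, hcubic 1 C0 C1).
Proof.
  intros Hd HB HC.
  set (P u := (czero, cadd (cscal ((1 - u) * B) (cmono 0)) (cscal u (cmono 1)), hcubic u C0 C1)).
  apply (joinable_eqA d (P 0) _ (P 1)).
  - unfold P, line_knot, hcubic; simpl. repeat split; intros; coef_simpl; ring.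
  - unfold P; simpl. repeat split; intros; coef_simpl; ring.
  - apply joinable_path; [unfold P, hcubic; coef_continuity|].
    intros u [Hu0 Hu1]. apply inPd_iff. split.
    + destruct (hcubic_injective d u C0 C1 Hd HC Hu0). apply knot_fun_of_h; auto.
    + unfold P, hcubic. destruct (Req_EM_T u 0) as [->|Hu].
      * exists 0%nat, 1%nat. repeat split; try lia; intros; coef_simpl; lra.
      * exists 1%nat, 3%nat. repeat split; try lia; intros; coef_simpl; try lra.
        intros E; apply Hu. nra.
Qed.

Lemma joinable_cubic_std d C0 C1 : (3 <= d)%nat -> C1 <> 0 ->
  joinable d (czero, cmono 1, hcubic 1 C0 C1) std_knot.
Proof.
  intros Hd HC.
  set (P u := (czero, cmono 1, cadd (cscal (1 - u) (hcubic 1 C0 C1)) (cscal u (cmono 2)))).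
  apply (joinable_eqA d (P 0) _ (P 1)).
  - unfold P, hcubic; simpl. repeat split; intros; coef_simpl; ring.
  - unfold P, std_knot, hcubic; simpl. repeat split; intros; coef_simpl; ring.
  - apply joinable_path; [unfold P, hcubic; coef_continuity|].
    intros u [Hu0 Hu1]. apply inPd_iff. split.
    + apply knot_fun_of_g; [intros t1 t2|intros t]; poly_simpl; lra.
    + unfold P, hcubic. destruct (Req_EM_T u 1) as [->|Hu].
      * exists 1%nat, 2%nat. repeat split; try lia; intros; coef_simpl; lra.
      * exists 1%nat, 3%nat. repeat split; try lia; intros; coef_simpl; try lra.
        intros E. assert (E' : (1 - u) * C1 = 0) by (rewrite <- E; ring).
        destruct (Rmult_integral _ _ E'); [apply Hu; lra|contradiction].
Qed.

Lemma joinable_std d p : (3 <= d)%nat -> inPd d p -> joinable d p std_knot.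
Proof.
  intros Hd Hin. destruct p as [[a b] c].
  destruct (joinable_normalize d a b c Hd Hin) as [a1 [b1 [c1 [J [Ha0 [Hb0 Hc1]]]]]].
  apply (joinable_trans d _ _ _ J), (joinable_trans d _ (line_knot (b1 0%nat) (c1 0%nat) (c1 1%nat))).
  - apply joinable_sym, joinable_blowup; auto; [lia|exact (joinable_inPd_r d _ _ J)].
  - eapply joinable_trans; [apply joinable_line_cubic|apply joinable_cubic_std]; auto.
Qed.

Theorem mainTheorem4 (d : nat) (Hd : (3 <= d)%nat) : Pd_path_connected d.
Proof.
  intros p q Hp Hq. apply path_of_joinable.
  apply (joinable_trans d p std_knot q); [|apply joinable_sym]; apply joinable_std; assumption.
Qed.
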